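(* Let $G$ be a finite group, $T$ a $G$-Tambara functor, and $I,J$ Tambara ideals of $T$. Then $\sqrt{IJ}=\sqrt I\cap\sqrt J$.
   Context: All rings are commutative with unit. A $G$-Tambara functor $T$ consists of commutative rings $T(G/H)$ for subgroups $H\le G$ with restriction ring maps, additive transfer maps, multiplicative norm maps and conjugation isomorphisms satisfying the standard Tambara axioms (Hill–Mazur). A Tambara ideal is a family of ring ideals $I(G/H)\subseteq T(G/H)$ closed under restriction, transfer, norm and conjugation; intersections are levelwise. $\langle x\rangle$ is the Tambara ideal generated by $x$. The product $IJ$ is the Tambara ideal generated by the levelwise products $I(G/H)\cdot J(G/H)$, $H\le G$. The radical $\sqrt I$ is the Tambara ideal with $\sqrt I(G/H)=\{x\in T(G/H)\mid \langle x\rangle^n\subseteq I\text{ for some }n\ge1\}$, $\langle x\rangle^n$ the $n$-fold product. *)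

(* Tambara functors in Tambara's original sense (functors on
   finite G-sets with restrictions, transfers and norms satisfying base change,
   the distributive (exponential) law and additivity); the subgroup levels
   T(G/H) are the values on the coset G-sets. *)
From HB Require Import structures.
From mathcomp Require Import all_boot all_order all_algebra all_fingroup.
Set Implicit Arguments. Unset Strict Implicit. Unset Printing Implicit Defensive.
Import GRing.Theory.
Local Open Scope ring_scope.

Section Tambara.
Variable gT : finGroupType.

Record gset := GSet {
  gcar :> finType;
  gact : gcar -> gT -> gcar;
  gact1 : forall x, gact x 1%g = x;
  gactM : forall x g h, gact x (g * h)%g = gact (gact x g) h }.

Record ghom (X Y : gset) := GHom {
  ghfun :> X -> Y;
  ghequi : forall x g, ghfun (gact x g) = gact (ghfun x) g }.

Record tdata := TData {
  tamval : gset -> comPzRingType;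
  tres : forall X Y : gset, ghom X Y -> tamval Y -> tamval X;
  ttr  : forall X Y : gset, ghom X Y -> tamval X -> tamval Y;
  tnm  : forall X Y : gset, ghom X Y -> tamval X -> tamval Y }.

Section TAx.
Variable D : tdata.
Local Notation T := (tamval D).
Local Notation R := (@tres D _ _).
Local Notation Tr := (@ttr D _ _).
Local Notation N := (@tnm D _ _).

Definition ax_ring :=
  forall (X Y : gset) (f : ghom X Y),
    (R f 1 = 1 /\ forall a b, R f (a + b) = R f a + R f b /\ R f (a * b) = R f a * R f b)
    /\ (forall a b, Tr f (a + b) = Tr f a + Tr f b)
    /\ (N f 1 = 1 /\ forall a b, N f (a * b) = N f a * N f b).

Definition ax_funct :=
  (forall (X : gset) (f : ghom X X), (forall x, f x = x) ->
     forall a, R f a = a /\ Tr f a = a /\ N f a = a)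
  /\ (forall (X Y Z : gset) (f : ghom X Y) (g : ghom Y Z) (h : ghom X Z),
       (forall x, h x = g (f x)) ->
       (forall a, R h a = R f (R g a)) /\
       (forall a, Tr h a = Tr g (Tr f a)) /\ (forall a, N h a = N g (N f a))).

(* the square  X' -f'-> Y' ; X' -g'-> X ; Y' -g-> Y ; X -f-> Y  is a pullback *)
Definition is_pullback (X Y X' Y' : gset) (f : ghom X Y) (g : ghom Y' Y)
    (f' : ghom X' Y') (g' : ghom X' X) :=
  (forall x', f (g' x') = g (f' x')) /\
  (forall x y', f x = g y' ->
     exists x', g' x' = x /\ f' x' = y' /\
       forall x'', g' x'' = x -> f' x'' = y' -> x'' = x').

Definition ax_basechange :=
  forall (X Y X' Y' : gset) (f : ghom X Y) (g : ghom Y' Y)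
    (f' : ghom X' Y') (g' : ghom X' X),
    is_pullback f g f' g' ->
    forall a, R g (Tr f a) = Tr f' (R g' a) /\ R g (N f a) = N f' (R g' a).

(* exponential diagram for A -p-> X -q-> Y:
     A <-e- X' -f-> Pi -r-> Y,  with X' -pi-> X,
   X' = X x_Y Pi, and Pi = the G-set of pairs (y, section of p over q^-1(y)). *)
Definition is_exponential (A X Y X' Pi : gset) (p : ghom A X) (q : ghom X Y)
    (e : ghom X' A) (pi : ghom X' X) (f : ghom X' Pi) (r : ghom Pi Y) :=
  (forall x', p (e x') = pi x') /\
  is_pullback q r f pi /\
  (forall (y : Y) (s : X -> option A),
     (forall x, q x = y -> exists a, s x = Some a /\ p a = x) ->
     exists z, r z = y /\ forall x', f x' = z -> s (pi x') = Some (e x')) /\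
  (forall z1 z2, r z1 = r z2 ->
     (forall x1 x2, f x1 = z1 -> f x2 = z2 -> pi x1 = pi x2 -> e x1 = e x2) ->
     z1 = z2).

Definition ax_distrib :=
  forall (A X Y X' Pi : gset) (p : ghom A X) (q : ghom X Y)
    (e : ghom X' A) (pi : ghom X' X) (f : ghom X' Pi) (r : ghom Pi Y),
    is_exponential p q e pi f r ->
    forall a, N q (Tr p a) = Tr r (N f (R e a)).

(* T(empty) = 0 and T(X + Y) = T(X) x T(Y) *)
Definition ax_additive :=
  (forall X : gset, #|X| = 0%N -> forall u v : T X, u = v) /\
  (forall (X Y Z : gset) (i : ghom X Z) (j : ghom Y Z),
     injective i -> injective j -> (forall x y, i x <> j y) ->
     (forall z, (exists x, i x = z) \/ (exists y, j y = z)) ->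
     forall a b, exists u, R i u = a /\ R j u = b /\
       forall v, R i v = a -> R j v = b -> v = u).

Definition is_tambara :=
  ax_ring /\ ax_funct /\ ax_basechange /\ ax_distrib /\ ax_additive.
End TAx.

Record tambara := Tambara { tdat :> tdata; tambaraP : is_tambara tdat }.

Section Cosets.
Local Open Scope group_scope.
Variable H : {group gT}.
Definition coset_t := {A : {set gT} | A \in rcosets H [set: gT]}.

Lemma coset_act_proof (A : coset_t) (g : gT) :
  (val A :* g) \in rcosets H [set: gT].
Proof.
case: A => A /= /rcosetsP [x _ ->]; apply/rcosetsP; exists (x * g)%g.
  by rewrite inE. by rewrite rcosetM.
Qed.

Definition coset_act (A : coset_t) (g : gT) : coset_t :=
  exist (fun B => B \in rcosets H [set: gT]) _ (coset_act_proof A g).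

Lemma coset_act1 A : coset_act A 1%g = A.
Proof. by apply: val_inj; rewrite /= mulg1. Qed.

Lemma coset_actM A g h : coset_act A (g * h)%g = coset_act (coset_act A g) h.
Proof. by apply: val_inj; rewrite /= rcosetM. Qed.

Definition cosGS : gset := GSet coset_act1 coset_actM.
End Cosets.

Section Proj.
Local Open Scope group_scope.
Variables H K : {group gT}.
Hypothesis sHK : H \subset K.

Lemma proj_proof (A : coset_t H) : (K * val A)%g \in rcosets K [set: gT].
Proof.
case: A => A /= /rcosetsP [x _ ->]; apply/rcosetsP; exists x; first by rewrite inE.
by rewrite mulgA mulGSid.
Qed.

Definition proj_fun (A : cosGS H) : cosGS K := exist (fun B => B \in rcosets K [set: gT]) _ (proj_proof A).

Lemma proj_equi A g : proj_fun (gact A g) = gact (proj_fun A) g.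
Proof. by apply: val_inj; rewrite /= mulgA. Qed.

Definition proj : ghom (cosGS H) (cosGS K) := GHom proj_equi.
End Proj.

(* conjugation G/H -> G/(H^g),  Hx |-> g^-1 H x = H^g (g^-1 x) *)
Section Conj.
Local Open Scope group_scope.
Variables (H : {group gT}) (g : gT).

Lemma conjm_proof (A : coset_t H) :
  (g^-1 *: val A)%g \in rcosets (H :^ g) [set: gT].
Proof.
case: A => A /= /rcosetsP [x _ ->]; apply/rcosetsP; exists (g^-1 * x)%g.
  by rewrite inE.
by rewrite conjsgE -!mulgA mulg_set1 mulKVg.
Qed.

Definition conjm_fun (A : cosGS H) : cosGS (H :^ g)%G :=
  exist (fun B => B \in rcosets (H :^ g) [set: gT]) _ (conjm_proof A).

Lemma conjm_equi A h : conjm_fun (gact A h) = gact (conjm_fun A) h.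
Proof. by apply: val_inj; rewrite /= mulgA. Qed.

Definition conjm : ghom (cosGS H) (cosGS (H :^ g)%G) := GHom conjm_equi.
End Conj.

Section Ideals.
Variable T : tambara.
Local Notation TT H := (tamval T (cosGS H)).

Definition tfam := forall H : {group gT}, TT H -> Prop.

Definition is_tideal (I : tfam) :=
  (forall H, I H 0) /\
  (forall H a b, I H a -> I H b -> I H (a + b)) /\
  (forall H (r a : TT H), I H a -> I H (r * a)) /\
  (forall (H K : {group gT}) (sHK : H \subset K) a, I K a -> I H (tres (proj sHK) a)) /\
  (forall (H K : {group gT}) (sHK : H \subset K) a, I H a -> I K (ttr (proj sHK) a)) /\
  (forall (H K : {group gT}) (sHK : H \subset K) a, I H a -> I K (tnm (proj sHK) a)) /\
  (forall (H : {group gT}) (g : gT) a, I H a -> I (H :^ g)%G (ttr (conjm H g) a)).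

Definition subfam (I J : tfam) := forall H x, I H x -> J H x.
Definition capI (I J : tfam) : tfam := fun H x => I H x /\ J H x.

Definition tgen (S : tfam) : tfam :=
  fun H y => forall J, is_tideal J -> subfam S J -> J H y.

Definition tprinc (H0 : {group gT}) (x : TT H0) : tfam :=
  fun H y => forall J, is_tideal J -> J H0 x -> J H y.

Definition tprod (I J : tfam) : tfam :=
  tgen (fun H z => exists a b, I H a /\ J H b /\ z = a * b).

(* n-fold product I^n (n >= 1): I^1 = I, I^(n+1) = I^n I *)
Fixpoint tpowS (I : tfam) (n : nat) : tfam :=
  match n with 0 => I | n'.+1 => tprod (tpowS I n') I end.
Definition tpow (I : tfam) (n : nat) : tfam := tpowS I n.-1.

Definition trad (I : tfam) : tfam :=
  fun H x => exists n, (1 <= n)%N /\ subfam (tpow (tprinc x) n) I.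
End Ideals.
End Tambara.

From Pilot Require Import Defs.
From mathcomp Require Import all_boot all_order all_algebra all_fingroup.
Set Implicit Arguments. Unset Strict Implicit. Unset Printing Implicit Defensive.
Import GRing.Theory.
Local Open Scope ring_scope.

(* Since IJ is contained in I and in J, one inclusion is immediate.  For the
   other, if <x>^n <= I and <x>^m <= J then <x>^(n+m) <= <x>^n <x>^m <= IJ,
   and the first step needs the associativity inclusion (AB)C <= A(BC).
   This rests on Nakaoka's description of the product: extending an ideal to
   every finite G-set X orbitwise, AB(G/K) consists of the transfers
   Tr_h(a b) along h : X -> G/K with a in A(X) and b in B(X).  These form a
   Tambara ideal (restriction is base change, multiplication is Frobenius
   reciprocity, norms are the distributive law), so they contain AB; and for
   c in C(G/K), Tr_h(a b) c = Tr_h(a (b Res_h c)) lies in A(BC) because an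
   ideal is closed under transfers from arbitrary G-sets, by induction on the
   number of orbits. *)

(** * Finite G-sets *)

Section GSets.
Variable gT : finGroupType.
Local Notation gset := (Defs.gset gT).
Local Notation gact := (@Defs.gact gT).
Local Notation gact1 := (@Defs.gact1 gT).
Local Notation gactM := (@Defs.gactM gT).

Lemma gactK (X : gset) (x : X) g : gact (gact x g) g^-1 = x.
Proof. by rewrite -gactM mulgV gact1. Qed.

Lemma gactKV (X : gset) (x : X) g : gact (gact x g^-1) g = x.
Proof. by rewrite -gactM mulVg gact1. Qed.

Lemma gact_eqV (X : gset) (u v : X) g : (gact u g^-1 == v) = (u == gact v g).
Proof. by apply/eqP/eqP => [<-|->]; rewrite ?gactKV ?gactK. Qed.

Definition gid (X : gset) : ghom X X := @GHom _ X X id (fun _ _ => erefl).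

Definition gcomp (X Y Z : gset) (f : ghom X Y) (g : ghom Y Z) : ghom X Z.
Proof. by exists (fun x => g (f x)) => x h; rewrite !ghequi. Defined.

Definition emptyGS : gset.
Proof. by exists ('I_0 : finType) (fun x _ => x). Defined.

Definition gfrom0 (X : gset) : ghom emptyGS X.
Proof.
by exists (fun i : 'I_0 => match i with Ordinal _ lt0 => False_rect _ (notF lt0) end); case.
Defined.

Definition sumGS (X Y : gset) : gset.
Proof.
refine (@GSet gT (X + Y)%type
  (fun w g => match w with inl x => inl (gact x g) | inr y => inr (gact y g) end) _ _).
  by case=> x; rewrite gact1.
by case=> x g h; rewrite gactM.
Defined.

Definition inlG (X Y : gset) : ghom X (sumGS X Y) := @GHom _ _ (sumGS X Y) inl (fun _ _ => erefl).
Definition inrG (X Y : gset) : ghom Y (sumGS X Y) := @GHom _ _ (sumGS X Y) inr (fun _ _ => erefl).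

Definition gcase (X1 X2 Y : gset) (h1 : ghom X1 Y) (h2 : ghom X2 Y) : ghom (sumGS X1 X2) Y.
Proof.
exists (fun w => match w with inl x => h1 x | inr x => h2 x end).
by case=> x g /=; rewrite ghequi.
Defined.

Definition sum_map (X1 X2 Y1 Y2 : gset) (f1 : ghom X1 Y1) (f2 : ghom X2 Y2) :
  ghom (sumGS X1 X2) (sumGS Y1 Y2) := gcase (gcomp f1 (inlG Y1 Y2)) (gcomp f2 (inrG Y1 Y2)).

Definition codiag (X : gset) : ghom (sumGS X X) X := gcase (gid X) (gid X).

Definition is_coproduct (U V X : gset) (i : ghom U X) (j : ghom V X) :=
  [/\ injective i, injective j, forall u v, i u <> j v &
      forall x, (exists u, i u = x) \/ (exists v, j v = x)].

Lemma sum_coproduct (X Y : gset) : is_coproduct (inlG X Y) (inrG X Y).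
Proof.
split=> [x y [] // | x y [] // | x y // |].
by case=> x; [left | right]; exists x.
Qed.

Section Pullbacks.
Variables X Y X' Y' : gset.

Lemma pullback_inj (i : ghom X Y) : injective i -> is_pullback i i (gid X) (gid X).
Proof. by move=> inj_i; split=> // x y' /inj_i ->; exists y'. Qed.

Lemma pullback_disj (i : ghom X Y) (j : ghom Y' Y) :
  (forall x y', i x <> j y') -> is_pullback i j (gfrom0 Y') (gfrom0 X).
Proof. by move=> disj; split=> [[]|x y' /disj]. Qed.

Lemma pullback_iso (phi : ghom X Y) (psi : ghom Y X) :
  cancel psi phi -> cancel phi psi -> is_pullback phi (gid Y) (gid Y) psi.
Proof.
move=> psiK phiK; split=> [y | x y' /= <-]; first exact: psiK.
by exists (phi x); split; [exact: phiK | split=> // x'' _ ->].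
Qed.

Lemma pullback_sum_inl (f1 : ghom X Y) (f2 : ghom X' Y') :
  is_pullback (sum_map f1 f2) (inlG Y Y') f1 (inlG X X').
Proof.
split=> // [[x | x]] y' //= [<-].
by exists x; do 2!split=> //; move=> x'' [].
Qed.

Lemma pullback_sum_inr (f1 : ghom X Y) (f2 : ghom X' Y') :
  is_pullback (sum_map f1 f2) (inrG Y Y') f2 (inrG X X').
Proof.
split=> // [[x | x]] y' //= [<-].
by exists x; do 2!split=> //; move=> x'' [].
Qed.

Variables (f : ghom X Y) (g : ghom Y' Y).

Definition pullback_t := {w : (X * Y')%type | f w.1 == g w.2}.

Lemma pullback_act_proof (w : pullback_t) h : f (gact (val w).1 h) == g (gact (val w).2 h).
Proof. by case: w => -[x y] /= /eqP E; rewrite !ghequi E. Qed.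

Definition pullbackGS : gset.
Proof.
refine (@GSet gT (pullback_t : finType)
  (fun w h => exist _ (gact (val w).1 h, gact (val w).2 h) (pullback_act_proof w h)) _ _).
  by move=> w; apply: val_inj; case: w => -[x y] /= _; rewrite !gact1.
by move=> w h k; apply: val_inj; case: w => -[x y] /= _; rewrite !gactM.
Defined.

Definition pullback1 : ghom pullbackGS X :=
  @GHom _ pullbackGS X (fun w => (val w).1) (fun _ _ => erefl).
Definition pullback2 : ghom pullbackGS Y' :=
  @GHom _ pullbackGS Y' (fun w => (val w).2) (fun _ _ => erefl).

Lemma pullbackP : is_pullback f g pullback2 pullback1.
Proof.
split=> [[[x y] /= /eqP] // | x y fxgy].
have P : f (x, y).1 == g (x, y).2 by apply/eqP.
exists (exist _ (x, y) P); split=> //; split=> // [[[x' y'] P']] /= Ex Ey.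
by apply: val_inj; rewrite /= Ex Ey.
Qed.
End Pullbacks.

Lemma frobenius_exponential (X' X : gset) (f : ghom X' X) :
  is_exponential (sum_map f (gid X)) (codiag X) (sum_map (gid X') f) (sum_map f f)
    (codiag X') f.
Proof.
split; first by case.
split.
  split=> [[] // | [] x y' /= ->]; [exists (inl y') | exists (inr y')];
    by do 2!split=> //; case=> x'' /= E <-; case: E.
split=> [y s Hs | z1 z2 fz12 Hz].
  have [[z | x] [sz]] := Hs (inl y) erefl; case=> // fz.
  exists z; split=> // -[] x' /= ->; first by rewrite fz.
  have [[z' | x] [sx]] := Hs (inr y) erefl; case=> //= xy.
  by rewrite fz sx xy.
by have := Hz (inl z1) (inl z2) erefl erefl; rewrite /= fz12 => /(_ erefl) [].
Qed.

Section Exponential.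
Variables (A X Y : gset) (p : ghom A X) (q : ghom X Y).

(* A point of the dependent product over y : Y is a section of p over the
   fibre q^-1(y), encoded as a partial function that is None off the fibre. *)
Definition is_section (zs : Y * {ffun X -> option A}) : bool :=
  [forall x, if q x == zs.1 then (if zs.2 x is Some a then p a == x else false)
             else zs.2 x == None].

Definition section_t := {zs : (Y * {ffun X -> option A})%type | is_section zs}.

Definition section_act (zs : Y * {ffun X -> option A}) h : Y * {ffun X -> option A} :=
  (gact zs.1 h, [ffun x => omap (fun a : A => gact a h) (zs.2 (gact x h^-1))]).

Lemma section_act_proof (z : section_t) h : is_section (section_act (val z) h).
Proof.
case: z => -[y s] /= /forallP P; apply/forallP => x /=; rewrite ffunE.
have := P (gact x h^-1); rewrite /= ghequi gact_eqV.
case: (q x == gact y h) => [|/eqP -> //].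
by case: (s _) => // a /= /eqP E; rewrite ghequi E gactKV.
Qed.

Definition dprodGS : gset.
Proof.
refine (@GSet gT (section_t : finType)
  (fun z h => exist _ (section_act (val z) h) (section_act_proof z h)) _ _).
  move=> z; apply: val_inj; case: z => -[y s] /= _; rewrite /section_act /= gact1.
  congr (_, _); apply/ffunP => x; rewrite ffunE invg1 gact1.
  by case: (s x) => //= a; rewrite gact1.
move=> z h k; apply: val_inj; case: z => -[y s] /= _; rewrite /section_act /= gactM.
congr (_, _); apply/ffunP => x; rewrite !ffunE invMg gactM.
by case: (s _) => //= a; rewrite gactM.
Defined.

Definition dprod_r : ghom dprodGS Y :=
  @GHom _ dprodGS Y (fun z => (val z).1) (fun _ _ => erefl).

Lemma section_on (z : dprodGS) x :
  q x = dprod_r z -> exists a, (val z).2 x = Some a /\ p a = x.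
Proof.
case: z => -[y s] /= /forallP /(_ x) /= P E; move: P; rewrite E eqxx.
by case: (s x) => // a /eqP <-; exists a.
Qed.

Lemma section_off (z : dprodGS) x : q x <> dprod_r z -> (val z).2 x = None.
Proof. by case: z => -[y s] /= /forallP /(_ x) /=; case: eqP => // _ /eqP. Qed.

Definition eval_t := {w : (A * dprodGS)%type | (val w.2).2 (p w.1) == Some w.1}.

Lemma eval_act_proof (w : eval_t) h :
  (val (gact (val w).2 h)).2 (p (gact (val w).1 h)) == Some (gact (val w).1 h).
Proof. by case: w => -[a [[y s] P]] /= /eqP E; rewrite ffunE ghequi gactK E. Qed.

Definition evalGS : gset.
Proof.
refine (@GSet gT (eval_t : finType)
  (fun w h => exist _ (gact (val w).1 h, gact (val w).2 h) (eval_act_proof w h)) _ _).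
  move=> w; apply: val_inj; case: w => -[a z] /= _.
  by congr (_, _); [exact: gact1 | exact: (gact1 z)].
move=> w h k; apply: val_inj; case: w => -[a z] /= _.
by congr (_, _); [exact: gactM | exact: (gactM z)].
Defined.

Definition eval_e : ghom evalGS A :=
  @GHom _ evalGS A (fun w => (val w).1) (fun _ _ => erefl).
Definition eval_f : ghom evalGS dprodGS :=
  @GHom _ evalGS dprodGS (fun w => (val w).2) (fun _ _ => erefl).
Definition eval_pi : ghom evalGS X := gcomp eval_e p.

Lemma eval_exists (a : A) (z : dprodGS) x :
  (val z).2 x = Some a -> p a = x -> exists w : evalGS, eval_e w = a /\ eval_f w = z.
Proof.
move=> za pa; have P : (val (a, z).2).2 (p (a, z).1) == Some (a, z).1 by rewrite /= pa za.
by exists (exist _ (a, z) P).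
Qed.

Lemma eval_pullback : is_pullback q dprod_r eval_f eval_pi.
Proof.
split=> [[[a z] /= /eqP za] | x z /section_on [a [za pa]]].
  by apply/eqP; apply: contraT => /eqP /section_off; rewrite za.
have [w [wa wz]] := eval_exists za pa.
exists w; split; first by rewrite -pa -wa.
split=> // [[[a' z'] P']] /= pa' z'z; apply: val_inj.
case: w wa wz => -[_ _] _ /= -> ->; rewrite -z'z; congr (_, _).
by move: P'; rewrite pa' z'z za => /eqP [].
Qed.

Lemma dprod_exists y (s : X -> option A) :
  (forall x, q x = y -> exists a, s x = Some a /\ p a = x) ->
  exists z, dprod_r z = y /\ forall w, eval_f w = z -> s (eval_pi w) = Some (eval_e w).
Proof.
move=> s_sec; pose s' := [ffun x => if q x == y then s x else None].
have P : is_section (y, s').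
  by apply/forallP => x /=; rewrite ffunE; case: eqP => // /s_sec [a [-> /eqP]].
exists (exist _ (y, s') P); split=> // -[[a z] /= za] zE; move: za.
by rewrite zE /= ffunE; case: ifP => // _ /eqP.
Qed.

Lemma dprod_eq (z1 z2 : dprodGS) : dprod_r z1 = dprod_r z2 ->
  (forall w1 w2, eval_f w1 = z1 -> eval_f w2 = z2 -> eval_pi w1 = eval_pi w2 ->
     eval_e w1 = eval_e w2) ->
  z1 = z2.
Proof.
case: z1 z2 => -[y s1] P1 [[y' s2] P2] /= y'y Hz; subst y'.
apply: val_inj; congr (_, _); apply/ffunP => x.
case: (eqVneq (q x) y) => [qx | /eqP qx]; last first.
  rewrite (section_off (z := exist _ (y, s1) P1)) //.
  by rewrite (section_off (z := exist _ (y, s2) P2)).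
have [a1 [sa1 pa1]] := section_on (z := exist _ (y, s1) P1) qx.
have [a2 [sa2 pa2]] := section_on (z := exist _ (y, s2) P2) qx.
have [w1 [wa1 wz1]] := eval_exists sa1 pa1.
have [w2 [wa2 wz2]] := eval_exists sa2 pa2.
have a12 : a1 = a2.
  rewrite -wa1 -wa2; apply: Hz => //.
  by change (p (eval_e w1) = p (eval_e w2)); rewrite wa1 wa2 pa1 pa2.
by rewrite /= in sa1 sa2; rewrite sa1 sa2 a12.
Qed.

Lemma exponentialP : is_exponential p q eval_e eval_pi eval_f dprod_r.
Proof.
split=> //; split; first exact: eval_pullback.
by split; [exact: dprod_exists | exact: dprod_eq].
Qed.

Lemma eval_f_surj : (forall y, exists x, q x = y) -> forall z, exists w, eval_f w = z.
Proof.
move=> q_surj z; have [x /section_on [a [za pa]]] := q_surj (dprod_r z).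
by have [w [_ wz]] := eval_exists za pa; exists w.
Qed.
End Exponential.

Section SubGSet.
Variables (X : gset) (P : pred X).
Hypothesis actP : forall x h, P x -> P (gact x h).

Definition subGS : gset.
Proof.
refine (@GSet gT ({x : X | P x} : finType)
  (fun x h => exist _ (gact (val x) h) (actP h (valP x))) _ _).
  by move=> x; apply: val_inj; rewrite /= gact1.
by move=> x g h; apply: val_inj; rewrite /= gactM.
Defined.

Definition subG_val : ghom subGS X := @GHom _ subGS X val (fun _ _ => erefl).

Lemma card_subGS x0 : ~~ P x0 -> (#|subGS| < #|X|)%N.
Proof.
move=> Px0; rewrite card_sig -(cardC [pred x | P x]) -[X in (X < _)%N]addn0 ltn_add2l.
by apply/card_gt0P; exists x0; rewrite !inE.
Qed.
End SubGSet.

Local Open Scope group_scope.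

Section Cosets.
Variable L : {group gT}.

Lemma rcos_proof y : L :* y \in rcosets L [set: gT].
Proof. by apply/rcosetsP; exists y; rewrite ?inE. Qed.

Definition rcos y : cosGS L := exist _ (L :* y) (rcos_proof y).

Lemma rcos_act y z : gact (rcos y) z = rcos (y * z).
Proof. by apply: val_inj; rewrite /= rcosetM. Qed.

Lemma rcos1_act y : gact (rcos 1) y = rcos y.
Proof. by rewrite rcos_act mul1g. Qed.

Lemma rcosP (B : cosGS L) : exists y, B = rcos y.
Proof. by case: B => A /[dup] /rcosetsP [y _ ->] P; exists y; apply: val_inj. Qed.

Lemma rcos_eq y z : rcos y = rcos z <-> y * z^-1 \in L.
Proof.
rewrite -mem_rcoset; split=> [/(congr1 val) /= /rcoset_eqP // | /rcoset_eqP E].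
exact: val_inj.
Qed.
End Cosets.

Lemma proj_rcos (H K : {group gT}) (sHK : H \subset K) y : proj sHK (rcos H y) = rcos K y.
Proof. by apply: val_inj; rewrite /= mulgA mulGSid. Qed.

Lemma proj_surj (H K : {group gT}) (sHK : H \subset K) (B : cosGS K) :
  exists B', proj sHK B' = B.
Proof. by have [y ->] := rcosP B; exists (rcos H y); rewrite proj_rcos. Qed.

Section LeftTranslation.
Variables (K : {group gT}) (y : gT).

Lemma lmul_proof (B : cosGS (K :^ y)%G) : y *: val B \in rcosets K [set: gT].
Proof.
case: B => A /= /rcosetsP [z _ ->]; apply/rcosetsP; exists (y * z); rewrite ?inE //.
apply/setP => w; rewrite mem_lcoset !mem_rcoset mem_conjg conjgE invgK invMg.
by rewrite !mulgA mulgV mul1g.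
Qed.

Definition lmul : ghom (cosGS (K :^ y)%G) (cosGS K).
Proof.
exists (fun B => exist _ (y *: val B) (lmul_proof B)) => B h.
by apply: val_inj; rewrite /= mulgA.
Defined.

Lemma lmulK : cancel lmul (conjm K y).
Proof. by move=> B; apply: val_inj; rewrite /= -lcosetM mulVg lcoset1. Qed.

Lemma conjmK : cancel (conjm K y) lmul.
Proof. by move=> B; apply: val_inj; rewrite /= -lcosetM mulgV lcoset1. Qed.

Lemma lmul_rcos z : lmul (rcos (K :^ y)%G z) = rcos K (y * z).
Proof.
apply: val_inj; apply/setP => w; rewrite /= mem_lcoset !mem_rcoset mem_conjg conjgE.
by rewrite invgK invMg !mulgA mulgV mul1g.
Qed.
End LeftTranslation.

Lemma coset_map_factor (L K : {group gT}) (g : ghom (cosGS L) (cosGS K)) :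
  exists y (sL : L \subset (K :^ y)%G), forall B, g B = lmul K y (proj sL B).
Proof.
have [y gL] := rcosP (g (rcos L 1)).
have sL : L \subset (K :^ y)%G.
  apply/subsetP => l Ll; have : rcos L l = rcos L 1 by apply/rcos_eq; rewrite invg1 mulg1.
  move/(congr1 g); rewrite -{1}rcos1_act ghequi gL rcos_act => /rcos_eq.
  by rewrite /= mem_conjg conjgE invgK mulgA.
exists y, sL => B; have [z ->] := rcosP B.
by rewrite proj_rcos lmul_rcos -rcos1_act ghequi gL rcos_act.
Qed.

Section Orbit.
Variables (X : gset) (L : {group gT}) (f : ghom X (cosGS L)) (x1 : X).
Hypothesis fx1 : f x1 = rcos L 1.

Lemma stab_group_set : group_set [set h | gact x1 h == x1].
Proof.
apply/group_setP; split=> [|u v]; first by rewrite inE gact1.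
by rewrite !inE gactM => /eqP -> /eqP ->.
Qed.

Definition stab : {group gT} := Group stab_group_set.

Lemma stab_sub : stab \subset L.
Proof.
apply/subsetP => h; rewrite inE => /eqP x1h.
have : f (gact x1 h) = f x1 by rewrite x1h.
by rewrite ghequi fx1 rcos1_act => /rcos_eq; rewrite invg1 mulg1.
Qed.

Lemma orbit_repr z : gact x1 (repr (stab :* z)) = gact x1 z.
Proof.
have := mem_repr_rcoset stab z; move: (repr _) => r.
by rewrite mem_rcoset inE => /eqP E; rewrite -{1}(mulgKV z r) gactM E.
Qed.

Lemma orbit_map_proof (B : cosGS stab) h :
  gact x1 (repr (val (gact B h))) = gact (gact x1 (repr (val B))) h.
Proof. by have [z ->] := rcosP B; rewrite rcos_act /= !orbit_repr gactM. Qed.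

Definition orbit_map : ghom (cosGS stab) X :=
  @GHom _ _ X (fun B : cosGS stab => gact x1 (repr (val B))) orbit_map_proof.

Lemma orbit_map_rcos z : orbit_map (rcos stab z) = gact x1 z.
Proof. exact: orbit_repr. Qed.

Lemma orbit_map_inj : injective orbit_map.
Proof.
move=> B1 B2; have [z1 ->] := rcosP B1; have [z2 ->] := rcosP B2.
rewrite !orbit_map_rcos => E; apply/rcos_eq.
by rewrite inE gactM E -gactM mulgV gact1.
Qed.

Lemma orbit_map_proj B : f (orbit_map B) = proj stab_sub B.
Proof.
by have [z ->] := rcosP B; rewrite proj_rcos orbit_map_rcos ghequi fx1 rcos1_act.
Qed.

Definition in_orbit (v : X) : bool := [exists h, gact x1 h == v].

Lemma notin_orbit_act v h : ~~ in_orbit v -> ~~ in_orbit (gact v h).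
Proof.
apply: contra => /existsP [k /eqP E]; apply/existsP; exists (k * h^-1).
by rewrite gactM E gactK.
Qed.

Lemma orbit_coproduct : is_coproduct orbit_map (subG_val notin_orbit_act).
Proof.
split=> [||B [v Pv] E|x].
- exact: orbit_map_inj.
- exact: val_inj.
- have [z Bz] := rcosP B; move: E; rewrite Bz orbit_map_rcos /= => xzv.
  by move/existsP: Pv; apply; exists z; rewrite xzv.
- case: (boolP (in_orbit x)) => [/existsP [z /eqP <-] | Px].
    by left; exists (rcos stab z); rewrite orbit_map_rcos.
  by right; exists (exist _ x Px).
Qed.

Lemma card_orbit_compl : (#|subGS notin_orbit_act| < #|X|)%N.
Proof. by apply: (@card_subGS _ _ _ x1); rewrite negbK; apply/existsP; exists 1; rewrite gact1. Qed.
End Orbit.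

Lemma orbit_decomp (X : gset) (L : {group gT}) (f : ghom X (cosGS L)) (x0 : X) :
  exists (M : {group gT}) (sML : M \subset L) (i : ghom (cosGS M) X) (V : gset) (j : ghom V X),
  [/\ is_coproduct i j, (#|V| < #|X|)%N & forall B, f (i B) = proj sML B].
Proof.
have [y fx0] := rcosP (f x0).
have fx1 : f (gact x0 y^-1) = rcos L 1 by rewrite ghequi fx0 rcos_act mulgV.
exists _, (stab_sub fx1), (orbit_map _), _, (subG_val (@notin_orbit_act _ (gact x0 y^-1))).
split; [exact: orbit_coproduct | exact: card_orbit_compl | exact: orbit_map_proj].
Qed.

Lemma coset_map_sum (L : {group gT}) (X1 X2 : gset) (g : ghom (cosGS L) (sumGS X1 X2)) :
  (exists g1 : ghom (cosGS L) X1, forall B, g B = inl (g1 B)) \/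
  (exists g2 : ghom (cosGS L) X2, forall B, g B = inr (g2 B)).
Proof.
have gE B : exists z, g B = gact (g (rcos L 1)) z.
  by have [z ->] := rcosP B; exists z; rewrite -rcos1_act ghequi.
case g1E: (g (rcos L 1)) => [x0 | y0]; [left | right].
  pose g1 B := if g B is inl x then x else x0.
  have gl B : g B = inl (g1 B) by rewrite /g1; have [z ->] := gE B; rewrite g1E.
  have g1_equi B h : g1 (gact B h) = gact (g1 B) h.
    by have /esym := ghequi g B h; rewrite !gl => -[].
  by exists (@GHom _ _ X1 g1 g1_equi).
pose g2 B := if g B is inr y then y else y0.
have gr B : g B = inr (g2 B) by rewrite /g2; have [z ->] := gE B; rewrite g1E.
have g2_equi B h : g2 (gact B h) = gact (g2 B) h.
  by have /esym := ghequi g B h; rewrite !gr => -[].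
by exists (@GHom _ _ X2 g2 g2_equi).
Qed.
End GSets.

(** * Consequences of the Tambara axioms *)

Section TambaraFunctor.
Variables (gT : finGroupType) (T : tambara gT).
Local Notation gset := (Defs.gset gT).
Local Notation Tv X := (tamval T X).
Local Notation res := (@tres gT T _ _).
Local Notation tr := (@ttr gT T _ _).
Local Notation nm := (@tnm gT T _ _).

Lemma tambara_ring : ax_ring T. Proof. by case: (tambaraP T). Qed.
Lemma tambara_funct : ax_funct T. Proof. by case: (tambaraP T) => _ []. Qed.
Lemma tambara_basechange : ax_basechange T. Proof. by case: (tambaraP T) => _ [_ []]. Qed.
Lemma tambara_distrib : ax_distrib T. Proof. by case: (tambaraP T) => _ [_ [_ []]]. Qed.
Lemma tambara_additive : ax_additive T. Proof. by case: (tambaraP T) => _ [_ [_ [_ ]]]. Qed.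

Section Morphisms.
Variables (X Y : gset) (f : ghom X Y).

Lemma resD a b : res f (a + b) = res f a + res f b.
Proof. by have [[_ /(_ a b) []]] := tambara_ring f. Qed.
Lemma resM a b : res f (a * b) = res f a * res f b.
Proof. by have [[_ /(_ a b) []]] := tambara_ring f. Qed.
Lemma trD a b : tr f (a + b) = tr f a + tr f b. Proof. by have [_ []] := tambara_ring f. Qed.
Lemma nm1 : nm f 1 = 1. Proof. by have [_ [_ []]] := tambara_ring f. Qed.
Lemma nmM a b : nm f (a * b) = nm f a * nm f b. Proof. by have [_ [_ []]] := tambara_ring f. Qed.
Lemma res0 : res f 0 = 0. Proof. by apply/(addrI (res f 0)); rewrite -resD !addr0. Qed.
Lemma tr0 : tr f 0 = 0. Proof. by apply/(addrI (tr f 0)); rewrite -trD !addr0. Qed.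
End Morphisms.

Section Functoriality.
Variables (X Y Z : gset) (f : ghom X Y) (g : ghom Y Z) (h : ghom X Z).
Hypothesis hE : forall x, h x = g (f x).

Lemma res_comp a : res h a = res f (res g a).
Proof. by have [_ /(_ _ _ _ f g h hE) []] := tambara_funct. Qed.
Lemma tr_comp a : tr h a = tr g (tr f a).
Proof. by have [_ /(_ _ _ _ f g h hE) [_ []]] := tambara_funct. Qed.
Lemma nm_comp a : nm h a = nm g (nm f a).
Proof. by have [_ /(_ _ _ _ f g h hE) [_ []]] := tambara_funct. Qed.
End Functoriality.

Section Identity.
Variables (X : gset) (f : ghom X X).
Hypothesis fE : forall x, f x = x.

Lemma res_id a : res f a = a. Proof. by have [/(_ _ f fE a) []] := tambara_funct. Qed.
Lemma tr_id a : tr f a = a. Proof. by have [/(_ _ f fE a) [_ []]] := tambara_funct. Qed.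
Lemma nm_id a : nm f a = a. Proof. by have [/(_ _ f fE a) [_ []]] := tambara_funct. Qed.
End Identity.

Section BaseChange.
Variables (X Y X' Y' : gset) (f : ghom X Y) (g : ghom Y' Y) (f' : ghom X' Y') (g' : ghom X' X).
Hypothesis fg_pb : is_pullback f g f' g'.

Lemma res_tr_pullback a : res g (tr f a) = tr f' (res g' a).
Proof. by have [] := tambara_basechange fg_pb a. Qed.
Lemma res_nm_pullback a : res g (nm f a) = nm f' (res g' a).
Proof. by have [] := tambara_basechange fg_pb a. Qed.
End BaseChange.

Lemma tamval_empty (u v : Tv (emptyGS gT)) : u = v.
Proof. by have [empty0 _] := tambara_additive; apply: empty0; rewrite card_ord. Qed.

Section Embeddings.
Variables (U V X : gset) (i : ghom U X) (j : ghom V X).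

Lemma res_tr_inj : injective i -> forall b, res i (tr i b) = b.
Proof. by move=> /pullback_inj pb b; rewrite (res_tr_pullback pb) tr_id // res_id. Qed.
Lemma res_nm_inj : injective i -> forall b, res i (nm i b) = b.
Proof. by move=> /pullback_inj pb b; rewrite (res_nm_pullback pb) nm_id // res_id. Qed.

Lemma res_tr_disj : (forall v u, j v <> i u) -> forall b, res i (tr j b) = 0.
Proof.
move=> /pullback_disj pb b.
by rewrite (res_tr_pullback pb) (tamval_empty (res _ b) 0) tr0.
Qed.
Lemma res_nm_disj : (forall v u, j v <> i u) -> forall b, res i (nm j b) = 1.
Proof.
move=> /pullback_disj pb b.
by rewrite (res_nm_pullback pb) (tamval_empty (res _ b) 1) nm1.
Qed.
End Embeddings.

Section Coproduct.
Variables (U V X : gset) (i : ghom U X) (j : ghom V X).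
Hypothesis ij_coprod : is_coproduct i j.

Lemma coproduct_eq a b : res i a = res i b -> res j a = res j b -> a = b.
Proof.
have [inj_i inj_j ij_disj ij_cover] := ij_coprod.
have [_ /(_ _ _ _ i j inj_i inj_j ij_disj ij_cover (res i b) (res j b))] := tambara_additive.
by case=> u [_ [_ uniq_u]] ia ja; rewrite (uniq_u a) // (uniq_u b).
Qed.

Lemma tr_coproduct a : a = tr i (res i a) + tr j (res j a).
Proof.
have [inj_i inj_j ij_disj _] := ij_coprod.
have ji_disj v u : j v <> i u by move/esym/ij_disj.
by apply: coproduct_eq; rewrite resD res_tr_inj // res_tr_disj // ?addr0 ?add0r.
Qed.

Lemma nm_coproduct a : a = nm i (res i a) * nm j (res j a).
Proof.
have [inj_i inj_j ij_disj _] := ij_coprod.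
have ji_disj v u : j v <> i u by move/esym/ij_disj.
by apply: coproduct_eq; rewrite resM res_nm_inj // res_nm_disj // ?mulr1 ?mul1r.
Qed.
End Coproduct.

Lemma sum_glue (X Y : gset) (a : Tv X) (b : Tv Y) :
  exists u : Tv (sumGS X Y), res (inlG X Y) u = a /\ res (inrG X Y) u = b.
Proof.
have [inj_l inj_r lr_disj lr_cover] := sum_coproduct X Y.
have [_ /(_ _ _ _ _ _ inj_l inj_r lr_disj lr_cover a b) [u [ua [ub _]]]] := tambara_additive.
by exists u.
Qed.

Section SumMaps.
Variables (X1 X2 Y : gset) (h1 : ghom X1 Y) (h2 : ghom X2 Y).

Lemma tr_sum u :
  tr (gcase h1 h2) u = tr h1 (res (inlG X1 X2) u) + tr h2 (res (inrG X1 X2) u).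
Proof.
rewrite {1}(tr_coproduct (sum_coproduct X1 X2) u) trD.
by rewrite -(tr_comp (h := h1)) // -(tr_comp (h := h2)).
Qed.

Lemma nm_sum u :
  nm (gcase h1 h2) u = nm h1 (res (inlG X1 X2) u) * nm h2 (res (inrG X1 X2) u).
Proof.
rewrite {1}(nm_coproduct (sum_coproduct X1 X2) u) nmM.
by rewrite -(nm_comp (h := h1)) // -(nm_comp (h := h2)).
Qed.
End SumMaps.

Lemma nm_codiag (X : gset) u : nm (codiag X) u = res (inlG X X) u * res (inrG X X) u.
Proof. by rewrite nm_sum !nm_id. Qed.

Lemma tr_iso (X Y : gset) (phi : ghom X Y) (psi : ghom Y X) :
  cancel psi phi -> cancel phi psi -> forall a, tr phi a = res psi a.
Proof.
move=> psiK phiK a; have := res_tr_pullback (pullback_iso psiK phiK) a.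
by rewrite res_id // tr_id.
Qed.

(* Frobenius reciprocity is the distributive law for X' + X -> X + X -> X. *)
Lemma tr_frobenius (X' X : gset) (f : ghom X' X) (y : Tv X') (z : Tv X) :
  tr f y * z = tr f (y * res f z).
Proof.
have [w [wl wr]] := sum_glue y z.
have := tambara_distrib (frobenius_exponential f) w.
rewrite !nm_codiag (res_tr_pullback (pullback_sum_inl _ _)).
rewrite (res_tr_pullback (pullback_sum_inr _ _)) tr_id // wl wr => ->.
rewrite -(res_comp (h := inlG X' X)) // -(res_comp (h := gcomp f (inrG X' X))) //.
by rewrite (res_comp (f := f) (g := inrG X' X) (h := gcomp f (inrG X' X))) // wl wr.
Qed.

(** * Ideals on arbitrary G-sets *)

Section Ideal.
Unset Implicit Arguments.
Variable I : tfam T.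
Set Implicit Arguments.
Hypothesis I_ideal : is_tideal I.

Lemma tideal0 H : I H 0.
Proof. by case: I_ideal. Qed.
Lemma tidealD H a b : I H a -> I H b -> I H (a + b).
Proof. by case: I_ideal => _ [+ _]; apply. Qed.
Lemma tidealMl H r a : I H a -> I H (r * a).
Proof. by case: I_ideal => _ [_ [+ _]]; apply. Qed.
Lemma tidealMr H r a : I H a -> I H (a * r).
Proof. by rewrite mulrC; apply: tidealMl. Qed.
Lemma tideal_res (H K : {group gT}) (sHK : (H \subset K)%g) a :
  I K a -> I H (res (proj sHK) a).
Proof. by case: I_ideal => _ [_ [_ [+ _]]]; apply. Qed.
Lemma tideal_tr (H K : {group gT}) (sHK : (H \subset K)%g) a :
  I H a -> I K (tr (proj sHK) a).
Proof. by case: I_ideal => _ [_ [_ [_ [+ _]]]]; apply. Qed.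
Lemma tideal_nm (H K : {group gT}) (sHK : (H \subset K)%g) a :
  I H a -> I K (nm (proj sHK) a).
Proof. by case: I_ideal => _ [_ [_ [_ [_ [+ _]]]]]; apply. Qed.
Lemma tideal_conj H g a : I H a -> I (H :^ g)%G (tr (conjm H g) a).
Proof. by case: I_ideal => _ [_ [_ [_ [_ [_ +]]]]]; apply. Qed.

(* Nakaoka's extension I(X) of the ideal to an arbitrary finite G-set X. *)
Definition ideal_at (X : gset) (a : Tv X) :=
  forall (L : {group gT}) (g : ghom (cosGS L) X), I L (res g a).

Lemma ideal_at_res (X X' : gset) (k : ghom X' X) a : ideal_at a -> ideal_at (res k a).
Proof. by move=> Ia L g; rewrite -(res_comp (h := gcomp g k)). Qed.

Lemma ideal_at0 (X : gset) : ideal_at (0 : Tv X).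
Proof. by move=> L g; rewrite res0; apply: tideal0. Qed.

Lemma ideal_atMr (X : gset) (r a : Tv X) : ideal_at a -> ideal_at (a * r).
Proof. by move=> Ia L g; rewrite resM; apply: tidealMr. Qed.

Lemma ideal_at_coset K (a : Tv (cosGS K)) : I K a -> ideal_at a.
Proof.
move=> Ia L g; have [y [sL gE]] := coset_map_factor g.
rewrite (res_comp gE) -(tr_iso (@lmulK _ K y) (@conjmK _ K y)).
by apply: tideal_res; apply: tideal_conj.
Qed.

Lemma ideal_at_sum (X1 X2 : gset) (u : Tv (sumGS X1 X2)) :
  ideal_at (res (inlG X1 X2) u) -> ideal_at (res (inrG X1 X2) u) -> ideal_at u.
Proof.
move=> Iu1 Iu2 L g; have [[g1 gE] | [g2 gE]] := coset_map_sum g.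
  by rewrite (res_comp (g := inlG X1 X2) gE); apply: Iu1.
by rewrite (res_comp (g := inrG X1 X2) gE); apply: Iu2.
Qed.

(* Induction on #|X|: split off one orbit G/M -> X, on which the transfer
   becomes a transfer along a projection G/M -> G/L. *)
Lemma ideal_at_tr_coset (X : gset) (L : {group gT}) (f : ghom X (cosGS L)) a :
  ideal_at a -> I L (tr f a).
Proof.
have [n] := ubnP #|X|; elim: n X L f a => // n IHn X L f a cardX Ia.
have [x0 _ | X0] := pickP (@predT X); last first.
  have [empty0 _] := tambara_additive.
  by rewrite (empty0 X (eq_card0 X0) a 0) tr0; apply: tideal0.
have [M [sML [i [V [j [ij_coprod cardV fi]]]]]] := orbit_decomp f x0.
rewrite (tr_coproduct ij_coprod a) trD -(tr_comp (h := proj sML)) //.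
rewrite -(tr_comp (h := gcomp j f)) //; apply: tidealD.
  by apply: tideal_tr; apply: Ia.
by apply: IHn; [exact: leq_trans cardV cardX | apply: ideal_at_res].
Qed.

Lemma ideal_at_nm_coset (X : gset) (L : {group gT}) (f : ghom X (cosGS L)) a (x0 : X) :
  ideal_at a -> I L (nm f a).
Proof.
move=> Ia; have [M [sML [i [V [j [ij_coprod _ fi]]]]]] := orbit_decomp f x0.
rewrite (nm_coproduct ij_coprod a) nmM -(nm_comp (h := proj sML)) //.
rewrite -(nm_comp (h := gcomp j f)) //.
by apply: tidealMr; apply: tideal_nm; apply: Ia.
Qed.

(* Surjectivity matters: off the image of f the norm is 1. *)
Lemma ideal_at_nm (X Y : gset) (f : ghom X Y) a :
  (forall y, exists x, f x = y) -> ideal_at a -> ideal_at (nm f a).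
Proof.
move=> f_surj Ia L g; rewrite (res_nm_pullback (pullbackP f g)).
have [x fx] := f_surj (g (rcos L 1%g)).
have [w _] := (pullbackP f g).2 x _ fx.
by apply: (ideal_at_nm_coset _ w); apply: ideal_at_res.
Qed.
End Ideal.

(** * Products of Tambara ideals *)

Lemma tideal_bigcap (P : tfam T -> Prop) :
  is_tideal (fun H y => forall J : tfam T, is_tideal J -> P J -> J H y).
Proof.
split; first by move=> H J J_ideal _; apply: tideal0.
split; first by move=> H a b Ia Ib J J_ideal PJ; apply: tidealD; [|apply: Ia|apply: Ib].
split; first by move=> H r a Ia J J_ideal PJ; apply: tidealMl; [|apply: Ia].
split; first by move=> H K sHK a Ia J J_ideal PJ; apply: tideal_res; [|apply: Ia].
split; first by move=> H K sHK a Ia J J_ideal PJ; apply: tideal_tr; [|apply: Ia].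
split; first by move=> H K sHK a Ia J J_ideal PJ; apply: tideal_nm; [|apply: Ia].
by move=> H g a Ia J J_ideal PJ; apply: tideal_conj; [|apply: Ia].
Qed.

Lemma tprinc_ideal (H0 : {group gT}) (x : Tv (cosGS H0)) : is_tideal (tprinc x).
Proof. exact: (tideal_bigcap (fun J => J H0 x)). Qed.

Section Product.
Implicit Types A B : tfam T.

Lemma tprod_ideal A B : is_tideal (tprod A B).
Proof. exact: (tideal_bigcap (subfam _)). Qed.

Lemma tprodM A B (H : {group gT}) (a b : Tv (cosGS H)) :
  A H a -> B H b -> tprod A B (a * b).
Proof. by move=> Aa Bb J _; apply; exists a, b. Qed.

Lemma tprod_min A B (J : tfam T) : is_tideal J ->
  (forall (H : {group gT}) (a b : Tv (cosGS H)), A H a -> B H b -> J H (a * b)) ->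
  subfam (tprod A B) J.
Proof.
by move=> J_ideal ABJ H y; apply=> // K _ [a [b [Aa [Bb ->]]]]; apply: ABJ.
Qed.

Lemma tprodS A B A' B' : subfam A A' -> subfam B B' -> subfam (tprod A B) (tprod A' B').
Proof.
move=> sAA' sBB'; apply: tprod_min (tprod_ideal _ _) _ => H a b Aa Bb.
by apply: tprodM; [apply: sAA' | apply: sBB'].
Qed.

Lemma tprod_subl A B : is_tideal A -> subfam (tprod A B) A.
Proof. by move=> A_ideal; apply: tprod_min => // H a b Aa _; apply: tidealMr. Qed.

Lemma tprod_subr A B : is_tideal B -> subfam (tprod A B) B.
Proof. by move=> B_ideal; apply: tprod_min => // H a b _ Bb; apply: tidealMl. Qed.
End Product.

Section ProductDescription.
Unset Implicit Arguments.
Variables A B : tfam T.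
Set Implicit Arguments.
Hypotheses (A_ideal : is_tideal A) (B_ideal : is_tideal B).

(* Nakaoka's description of the values of the product ideal AB. *)
Definition tr_prod : tfam T := fun K u =>
  exists (X : gset) (h : ghom X (cosGS K)) (a b : Tv X),
    [/\ ideal_at A a, ideal_at B b & u = tr h (a * b)].
Arguments tr_prod : clear implicits.

Lemma tr_prod0 K : tr_prod K 0.
Proof.
exists (cosGS K), (gid _), 0, 0.
by split; [exact: ideal_at0 | exact: ideal_at0 | rewrite mulr0 tr0].
Qed.

Lemma tr_prodD K u v : tr_prod K u -> tr_prod K v -> tr_prod K (u + v).
Proof.
move=> [X1 [h1 [a1 [b1 [Aa1 Bb1 ->]]]]] [X2 [h2 [a2 [b2 [Aa2 Bb2 ->]]]]].
have [a [a_l a_r]] := sum_glue a1 a2; have [b [b_l b_r]] := sum_glue b1 b2.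
exists (sumGS X1 X2), (gcase h1 h2), a, b.
split; [by apply: ideal_at_sum; rewrite ?a_l ?a_r |
       by apply: ideal_at_sum; rewrite ?b_l ?b_r |].
by rewrite tr_sum !resM a_l a_r b_l b_r.
Qed.

Lemma tr_prodMl K r u : tr_prod K u -> tr_prod K (r * u).
Proof.
move=> [X [h [a [b [Aa Bb ->]]]]]; exists X, h, (a * res h r), b.
by split=> //; [exact: ideal_atMr | rewrite mulrC tr_frobenius mulrAC].
Qed.

Lemma tr_prod_res (H K : {group gT}) (k : ghom (cosGS H) (cosGS K)) u :
  tr_prod K u -> tr_prod H (res k u).
Proof.
move=> [X [h [a [b [Aa Bb ->]]]]].
exists (pullbackGS h k), (pullback2 h k), (res (pullback1 h k) a), (res (pullback1 h k) b).
split; [exact: ideal_at_res | exact: ideal_at_res |].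
by rewrite (res_tr_pullback (pullbackP h k)) resM.
Qed.

Lemma tr_prod_tr (H K : {group gT}) (k : ghom (cosGS H) (cosGS K)) u :
  tr_prod H u -> tr_prod K (tr k u).
Proof.
move=> [X [h [a [b [Aa Bb ->]]]]]; exists X, (gcomp h k), a, b.
by split=> //; rewrite (tr_comp (f := h) (g := k)).
Qed.

(* The distributive law rewrites the norm of a transfer as a transfer of norms. *)
Lemma tr_prod_nm (H K : {group gT}) (sHK : (H \subset K)%g) u :
  tr_prod H u -> tr_prod K (nm (proj sHK) u).
Proof.
move=> [X [h [a [b [Aa Bb ->]]]]].
have f_surj := eval_f_surj (proj_surj sHK).
exists (dprodGS h (proj sHK)), (dprod_r h (proj sHK)),
  (nm (eval_f h (proj sHK)) (res (eval_e h (proj sHK)) a)),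
  (nm (eval_f h (proj sHK)) (res (eval_e h (proj sHK)) b)).
split; [by apply: ideal_at_nm => //; apply: ideal_at_res
       |by apply: ideal_at_nm => //; apply: ideal_at_res |].
by rewrite (tambara_distrib (exponentialP h (proj sHK))) resM nmM.
Qed.

Lemma tr_prod_ideal : is_tideal tr_prod.
Proof.
split; first exact: tr_prod0.
split; first exact: tr_prodD.
split; first exact: tr_prodMl.
split; first by move=> H K sHK; apply: tr_prod_res.
split; first by move=> H K sHK; apply: tr_prod_tr.
split; first exact: tr_prod_nm.
by move=> H g; apply: tr_prod_tr.
Qed.

Lemma tprod_sub_tr_prod : subfam (tprod A B) tr_prod.
Proof.
apply: tprod_min tr_prod_ideal _ => H a b Aa Bb.
exists (cosGS H), (gid _), a, b.
by split; [exact: ideal_at_coset | exact: ideal_at_coset | rewrite tr_id].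
Qed.
End ProductDescription.

Lemma tprodA_sub (A B C : tfam T) : is_tideal A -> is_tideal B -> is_tideal C ->
  subfam (tprod (tprod A B) C) (tprod A (tprod B C)).
Proof.
move=> A_ideal B_ideal C_ideal.
apply: tprod_min (tprod_ideal _ _) _ => H u c /(tprod_sub_tr_prod A_ideal B_ideal).
move=> [X [h [a [b [Aa Bb ->]]]]] Cc; rewrite tr_frobenius -mulrA.
apply: (ideal_at_tr_coset (tprod_ideal _ _) h) => L g.
rewrite !resM; apply: tprodM (Aa L g) _; apply: tprodM (Bb L g) _.
by rewrite -(res_comp (h := gcomp g h)) //; apply: ideal_at_coset.
Qed.

Lemma tpowS_ideal (P : tfam T) k : is_tideal P -> is_tideal (tpowS P k).
Proof. by case: k => [|k] //= _; apply: tprod_ideal. Qed.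

Lemma tpowS_add (P : tfam T) m n : is_tideal P ->
  subfam (tpowS P (m + n.+1)) (tprod (tpowS P m) (tpowS P n)).
Proof.
move=> P_ideal; elim: n => [|n IHn]; first by rewrite addn1.
rewrite addnS => H y /(tprodS IHn (fun _ _ Py => Py)).
by apply: tprodA_sub => //; apply: tpowS_ideal.
Qed.
End TambaraFunctor.

Theorem proposition4p29 (gT : finGroupType) (T : tambara gT)
    (I J : tfam T) :
  is_tideal I -> is_tideal J ->
  forall (H : {group gT}) (x : tamval T (cosGS H)),
    trad (tprod I J) x <-> capI (trad I) (trad J) x.
Proof.
move=> I_ideal J_ideal H x; split.
  case=> n [n_gt0 xIJ]; split; exists n; split=> // K y /xIJ.
    exact: tprod_subl.
  exact: tprod_subr.
move=> [[n [n_gt0 xI]] [m [m_gt0 xJ]]].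
exists (n + m)%N; split=> [|K y]; first by rewrite addn_gt0 n_gt0.
rewrite /tpow -(prednK n_gt0) -(prednK m_gt0) addSn /=.
by move/(tpowS_add (tprinc_ideal x)); apply: tprodS xI xJ K y.
Qed.
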